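(* Let $\Omega=\{x\in\mathbb{R}^n: x^L\le x\le x^U\}$ with $x^L,x^U\in\mathbb{R}^n$ and $x^L_i<x^U_i$ for $i=1,\ldots,n$. Given any $x\in\Omega$ and $\alpha>0$, define $\alpha_{-i}:=\min(\alpha,x_i-x^L_i)$ and $\alpha_i:=\min(\alpha,x^U_i-x_i)$ for $i=1,\ldots,n$, and let $\mathcal{D}:=\bigcup_{i=1}^n\{-\alpha_{-i}e_i,\ \alpha_ie_i\}$, where $e_i$ are the coordinate vectors. Then $\mathcal{D}$ is a $\Lambda$-positive spanning set for $B(x,\alpha)\cap\Omega$ with $$\Lambda=\min\left[n,\ \frac{\sqrt n\,\alpha}{\min\left\{\alpha,\ \min_{i:\,x_i\neq x^L_i}(x_i-x^L_i),\ \min_{i:\,x_i\neq x^U_i}(x^U_i-x_i)\right\}}\right].$$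
   Context: $\|\cdot\|$ is the Euclidean norm, $B(y,r)=\{z:\|z-y\|\le r\}$. Given $x\in\Omega$, $\alpha>0$, $\Lambda\ge0$, a set $\{d_1,\ldots,d_p\}\subset\mathbb{R}^n$ is a $\Lambda$-positive spanning set for $B(x,\alpha)\cap\Omega$ if $x+d_i\in\Omega$ for all $i$ and, for every $v\in\mathbb{R}^n$ with $x+v\in\Omega$ and $\|v\|\le\alpha$, there exists $c\in\mathbb{R}^p$ with $c\ge0$, $v=\sum_ic_id_i$ and $\|c\|_1\le\Lambda$. (Directions with $\alpha_{\pm i}=0$ are zero vectors in $\mathcal{D}$.) *)

From mathcomp Require Import all_boot all_order all_algebra.
Set Implicit Arguments. Unset Strict Implicit. Unset Printing Implicit Defensive.
Import Order.TTheory GRing.Theory Num.Theory.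
Local Open Scope ring_scope.

Section Defs.
Variable R : rcfType.

Definition enorm (n : nat) (v : 'I_n -> R) : R := Num.sqrt (\sum_(k < n) v k ^+ 2).

Definition ecoord (n : nat) (i : 'I_n) : 'I_n -> R := fun k => if k == i then 1 else 0.

Definition box (n : nat) (xL xU : 'I_n -> R) : ('I_n -> R) -> Prop :=
  fun y => forall k, xL k <= y k <= xU k.

Definition Lambda_pss (n : nat) (I : finType) (Omega : ('I_n -> R) -> Prop)
    (x : 'I_n -> R) (alpha Lam : R) (d : I -> 'I_n -> R) : Prop :=
  (forall j, Omega (fun k => x k + d j k)) /\
  (forall v : 'I_n -> R, Omega (fun k => x k + v k) -> enorm v <= alpha ->
     exists c : I -> R, (forall j, 0 <= c j) /\
       (forall k, v k = \sum_(j : I) c j * d j k) /\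
       \sum_(j : I) `|c j| <= Lam).

Definition alpha_minus (n : nat) (xL x : 'I_n -> R) (alpha : R) (i : 'I_n) : R :=
  Num.min alpha (x i - xL i).
Definition alpha_plus (n : nat) (xU x : 'I_n -> R) (alpha : R) (i : 'I_n) : R :=
  Num.min alpha (xU i - x i).

(* the set D, indexed by (i, b): b = false gives -alpha_{-i} e_i, b = true gives alpha_i e_i *)
Definition coordD (n : nat) (xL xU x : 'I_n -> R) (alpha : R) (p : 'I_n * bool) : 'I_n -> R :=
  fun k => if p.2 then alpha_plus xU x alpha p.1 * ecoord p.1 k
           else - (alpha_minus xL x alpha p.1 * ecoord p.1 k).

(* min{alpha, min_{i: x_i <> xL_i}(x_i - xL_i), min_{i: x_i <> xU_i}(xU_i - x_i)}
   (a min over an empty index set is simply omitted) *)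
Definition min_gap (n : nat) (xL xU x : 'I_n -> R) (alpha : R) : R :=
  Num.min (\big[Num.min/alpha]_(i < n | x i != xL i) (x i - xL i))
          (\big[Num.min/alpha]_(i < n | x i != xU i) (xU i - x i)).

Definition Lambda_box (n : nat) (xL xU x : 'I_n -> R) (alpha : R) : R :=
  Num.min (n%:R) (Num.sqrt (n%:R) * alpha / min_gap xL xU x alpha).

End Defs.

(* A feasible step v with ||v|| <= alpha is a nonnegative combination of the directions,
   one coordinate at a time: v_i >= 0 uses alpha_i e_i with coefficient v_i / alpha_i, and
   v_i < 0 uses -alpha_{-i} e_i with coefficient -v_i / alpha_{-i}.  If v_i points towards a
   face of the box then x is not on that face, so the step length is at least
   m := min_gap; it is also at least |v_i|.  Each coefficient is therefore at most
   min(1, |v_i| / m), and summing bounds the total both by n and by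
   ||v||_1 / m <= sqrt n ||v|| / m <= sqrt n alpha / m (Cauchy-Schwarz). *)
From mathcomp Require Import all_boot all_order all_algebra.
From mathcomp Require Import ring lra.
Set Implicit Arguments. Unset Strict Implicit. Unset Printing Implicit Defensive.
Import Order.TTheory GRing.Theory Num.Theory.
Local Open Scope ring_scope.

Lemma sum_pair_bool (V : nmodType) (I : finType) (F : I * bool -> V) :
  \sum_(p : I * bool) F p = \sum_(i : I) (F (i, true) + F (i, false)).
Proof.
rewrite (eq_bigr (fun p => F (p.1, p.2))); last by case.
by rewrite -(pair_bigA _ (fun i b => F (i, b))); apply: eq_bigr => i _; rewrite big_bool.
Qed.

Section Norms.
Variables (R : rcfType) (n : nat).

Lemma abs_le_enorm (v : 'I_n -> R) (i : 'I_n) : `|v i| <= enorm v.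
Proof.
rewrite /enorm -sqrtr_sqr ler_wsqrtr // (bigD1 i) //= lerDl.
by apply: sumr_ge0 => j _; exact: sqr_ge0.
Qed.

Lemma sum_abs_le_sqrt_enorm (v : 'I_n -> R) :
  \sum_(i < n) `|v i| <= Num.sqrt n%:R * enorm v.
Proof.
have sum_ge0 : 0 <= \sum_(i < n) `|v i| by apply: sumr_ge0 => i _.
rewrite /enorm -sqrtrM ?ler0n // -(ger0_norm sum_ge0) -sqrtr_sqr ler_wsqrtr //.
(* Double the inequality: 2 n sum v_i^2 = sum_{i,j} (v_i^2 + v_j^2) >= sum_{i,j} 2|v_i||v_j|. *)
suff : 2 * (\sum_(i < n) `|v i|) ^+ 2 <= 2 * (n%:R * \sum_(i < n) v i ^+ 2) by lra.
have <- : \sum_(i < n) \sum_(j < n) (v i ^+ 2 + v j ^+ 2) =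
          2 * (n%:R * \sum_(i < n) v i ^+ 2).
  under eq_bigr do rewrite big_split /= sumr_const card_ord.
  by rewrite big_split /= sumr_const card_ord sumrMnl !mulr_natl mulr2n.
rewrite expr2 mulr_suml mulr_sumr; apply: ler_sum => i _.
rewrite !mulr_sumr; apply: ler_sum => j _.
rewrite -(real_normK (num_real (v i))) -(real_normK (num_real (v j))).
have := sqr_ge0 (`|v i| - `|v j|); nra.
Qed.

End Norms.

Lemma ratio_bounds (R : realFieldType) (u s m : R) :
  0 <= u <= s -> 0 < m -> (0 < u -> m <= s) ->
  [/\ u / s * s = u, 0 <= u / s & u / s <= Num.min 1 (u / m)].
Proof.
move=> /andP[u_ge0 u_le_s] m_gt0 m_le_s.
move: u_ge0; rewrite le_eqVlt => /predU1P[<-|u_gt0].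
  by rewrite !mul0r le_min ler01 lexx.
have s_gt0 : 0 < s := lt_le_trans u_gt0 u_le_s.
split; first by rewrite divfK // gt_eqF.
  by rewrite divr_ge0 // ltW.
rewrite le_min ler_pdivrMr // mul1r u_le_s /=.
by rewrite ler_pdivrMr // mulrAC ler_pdivlMr // ler_pM2l // m_le_s.
Qed.

Section CoordinateDirections.
Variables (R : rcfType) (n : nat) (xL xU x : 'I_n -> R) (alpha : R).
Hypotheses (x_in_box : box xL xU x) (alpha_gt0 : 0 < alpha).

Local Notation ap := (alpha_plus xU x alpha).
Local Notation am := (alpha_minus xL x alpha).
Local Notation m := (min_gap xL xU x alpha).

Lemma alpha_plus_ge0 i : 0 <= ap i.
Proof. by have /andP[_ ?] := x_in_box i; rewrite le_min ltW // subr_ge0. Qed.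

Lemma alpha_minus_ge0 i : 0 <= am i.
Proof. by have /andP[? _] := x_in_box i; rewrite le_min ltW // subr_ge0. Qed.

Lemma min_gap_gt0 : 0 < m.
Proof.
rewrite lt_min; apply/andP; split; apply/bigmin_gtP; split=> // i x_neq;
  have /andP[? ?] := x_in_box i; rewrite subr_gt0 lt_neqAle.
  by rewrite eq_sym x_neq.
by rewrite x_neq.
Qed.

Lemma min_gap_le_alpha_plus i : x i != xU i -> m <= ap i.
Proof.
move=> x_neq; rewrite le_min; apply/andP; split; rewrite ge_min.
  by rewrite bigmin_le_id.
by rewrite (bigmin_le_cond _ (P := fun j => x j != xU j)) ?orbT.
Qed.

Lemma min_gap_le_alpha_minus i : x i != xL i -> m <= am i.
Proof.
move=> x_neq; rewrite le_min; apply/andP; split; rewrite ge_min.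
  by rewrite bigmin_le_id.
by rewrite (bigmin_le_cond _ (P := fun j => x j != xL j)).
Qed.

Lemma coordD_in_box p : box xL xU (fun k => x k + coordD xL xU x alpha p k).
Proof.
case: p => i b k; rewrite /coordD /ecoord /=.
have /andP[xLk xUk] := x_in_box k.
case: eqP => [<-|_]; last by case: b; rewrite !mulr0 ?oppr0 addr0 xLk.
have := alpha_plus_ge0 k; have := alpha_minus_ge0 k.
have ap_le : ap k <= xU k - x k by rewrite ge_min lexx orbT.
have am_le : am k <= x k - xL k by rewrite ge_min lexx orbT.
case: b; rewrite mulr1 => *; apply/andP; split; lra.
Qed.

Lemma sum_coordD (c : 'I_n * bool -> R) k :
  \sum_p c p * coordD xL xU x alpha p k = c (k, true) * ap k - c (k, false) * am k.
Proof.
rewrite sum_pair_bool (bigD1 k) //= big1 ?addr0 => [|i /negbTE i_neq].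
  by rewrite /coordD /ecoord /= eqxx !mulr1 mulrN.
by rewrite /coordD /ecoord /= eq_sym i_neq !mulr0 oppr0 mulr0 addr0.
Qed.

Definition box_coef (v : 'I_n -> R) (p : 'I_n * bool) : R :=
  match p.2, 0 <= v p.1 with
  | true, true => v p.1 / ap p.1
  | false, false => - v p.1 / am p.1
  | _, _ => 0
  end.

Lemma box_coef_ge0 v p : 0 <= box_coef v p.
Proof.
case: p => i b; have := alpha_plus_ge0 i; have := alpha_minus_ge0 i.
rewrite /box_coef /=; case: b; case: (lerP 0 (v i)) => // v_sgn am_ge0 ap_ge0.
  exact: divr_ge0.
by rewrite divr_ge0 // oppr_ge0 ltW.
Qed.

Section Feasible.
Variable v : 'I_n -> R.
Hypotheses (v_feasible : box xL xU (fun k => x k + v k)) (v_small : enorm v <= alpha).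


Lemma box_coef_coord k :
  box_coef v (k, true) * ap k - box_coef v (k, false) * am k = v k /\
  box_coef v (k, true) + box_coef v (k, false) <= Num.min 1 (`|v k| / m).
Proof.
have /andP[vL vU] := v_feasible k.
have v_le_alpha := le_trans (abs_le_enorm v k) v_small.
have := ler_norm (v k); have := ler_norm (- v k); rewrite normrN => ? ?.
have m_gt0 := min_gap_gt0.
rewrite /box_coef /=; case: (lerP 0 (v k)) => v_sgn.
- have [||->] := @ratio_bounds _ (v k) (ap k) m _ m_gt0.
  + by rewrite v_sgn le_min; apply/andP; split; lra.
  + move=> v_gt0; apply: min_gap_le_alpha_plus.
    by apply: contraTneq v_gt0 => x_eq; rewrite -leNgt; lra.
  by move=> ? ?; rewrite ger0_norm // mul0r subr0 addr0.
- have [||->] := @ratio_bounds _ (- v k) (am k) m _ m_gt0.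
  + by rewrite oppr_ge0 ltW //= le_min; apply/andP; split; lra.
  + move=> v_gt0; apply: min_gap_le_alpha_minus.
    by apply: contraTneq v_gt0 => x_eq; rewrite -leNgt; lra.
  by move=> ? ?; rewrite ltr0_norm // mul0r !add0r opprK.
Qed.

Lemma sum_box_coef_le : \sum_p `|box_coef v p| <= Lambda_box xL xU x alpha.
Proof.
have bound i := (box_coef_coord i).2; have m_gt0 := min_gap_gt0.
under eq_bigr do rewrite ger0_norm ?box_coef_ge0 //.
rewrite sum_pair_bool /Lambda_box le_min; apply/andP; split.
  rewrite -[n in n%:R]card_ord -sumr_const; apply: ler_sum => i _.
  by have := bound i; rewrite le_min => /andP[].
apply: (@le_trans _ _ (\sum_(i < n) (`|v i| / m))).
  by apply: ler_sum => i _; have := bound i; rewrite le_min => /andP[].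
rewrite -mulr_suml ler_pM2r ?invr_gt0 //.
apply: le_trans (sum_abs_le_sqrt_enorm v) _.
by rewrite ler_wpM2l ?sqrtr_ge0.
Qed.

End Feasible.

End CoordinateDirections.

Theorem theorem5p1 (R : rcfType) (n : nat) (xL xU x : 'I_n -> R) (alpha : R) :
  (forall i, xL i < xU i) ->
  box xL xU x ->
  0 < alpha ->
  Lambda_pss (box xL xU) x alpha (Lambda_box xL xU x alpha) (coordD xL xU x alpha).
Proof.
move=> _ x_in_box alpha_gt0; split; first exact: coordD_in_box.
move=> v v_feasible v_small; exists (box_coef xL xU x alpha v); split; [|split].
- exact: box_coef_ge0.
- move=> k; rewrite sum_coordD.
  by case: (box_coef_coord x_in_box alpha_gt0 v_feasible v_small k).
- exact: sum_box_coef_le.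
Qed.
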